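(* For each $r\in\{22,24,26\}$ there exists a binary linear $[n,n-r,3]_2 2$ code with $n=53\cdot 2^{r/2-5}-3$, i.e. of lengths $3389$, $6781$, $13565$ respectively. Consequently $\ell_2(22,2)\le 3389$, $\ell_2(24,2)\le 6781$, $\ell_2(26,2)\le 13565$.
   Context: An $[n,n-r,d]_2R$ code is a binary linear code of length $n$, codimension $r$, minimum distance $d$, and covering radius $R$ (the smallest $R$ such that every vector of $\mathbb{F}_2^r$ is a sum of at most $R$ columns of a parity-check matrix). $\ell_2(r,R)$ denotes the smallest length of a binary linear code of codimension $r$ and covering radius $R$. *)

From HB Require Import structures.
From mathcomp Require Import all_boot all_order all_algebra.
Set Implicit Arguments. Unset Strict Implicit. Unset Printing Implicit Defensive.
Import GRing.Theory.
Local Open Scope ring_scope.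

Definition codeword (r n : nat) (H : 'M['F_2]_(r, n)) (c : 'rV['F_2]_n) : Prop :=
  H *m c^T = 0.

Definition wt (n : nat) (c : 'rV['F_2]_n) : nat := #|[set j | c 0 j != 0]|.

Definition min_dist_is (r n : nat) (H : 'M['F_2]_(r, n)) (d : nat) : Prop :=
  (exists c, codeword H c /\ c <> 0 /\ wt c = d) /\
  (forall c, codeword H c -> c <> 0 -> (d <= wt c)%N).

Definition covers_within (r n : nat) (H : 'M['F_2]_(r, n)) (R : nat) : Prop :=
  forall s : 'cV['F_2]_r,
    exists S : {set 'I_n}, (#|S| <= R)%N /\ s = \sum_(j in S) col j H.

Definition covering_radius_is (r n : nat) (H : 'M['F_2]_(r, n)) (R : nat) : Prop :=
  covers_within H R /\ (forall R', covers_within H R' -> (R <= R')%N).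

(* H is a parity-check matrix of an [n, n-r, d]_2 R code (codimension r). *)
Definition is_code (n r d R : nat) (H : 'M['F_2]_(r, n)) : Prop :=
  \rank H = r /\ min_dist_is H d /\ covering_radius_is H R.

(* l_2(r, R) <= N : some binary linear code of codimension r and covering
   radius R has length at most N (l_2 is the least such length). *)
Definition ell2_le (r R N : nat) : Prop :=
  exists n, (n <= N)%N /\
    exists H : 'M['F_2]_(r, n), \rank H = r /\ covering_radius_is H R.

(* Let c_0 = 0, c_1, ..., c_50 in F_2^10 be such that every vector
   of F_2^10 is a sum c_i + c_j (a computer-found base code, verified by evaluation), let
   xi_0, ..., xi_50 be distinct elements of F = GF(2^m), m = r/2 - 5, and identify F with
   F_2^m as an additive group.  The columns (c_i, x, xi_i x) and (0, 0, y), x, y in F, still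
   cover every syndrome (s, x, y) with two columns: for s = 0 take (0, x, xi_0 x) and
   (0, 0, y - xi_0 x); otherwise s = c_i + c_j with xi_i <> xi_j, and (c_i, z, xi_i z) and
   (c_j, x - z, xi_j (x - z)) work for the z with xi_i z + xi_j (x - z) = y.  These at most
   52 * 2^m nonzero columns contain three summing to zero, and further nonzero columns up to
   length 53 * 2^m - 3 preserve both properties, so the code has minimum distance 3; its
   covering radius is exactly 2 because 2^r exceeds the length plus one. *)

From HB Require Import structures.
From mathcomp Require Import all_boot all_order all_algebra.
From mathcomp Require Import fingroup morphism abelian finalg finfield zify.
Set Implicit Arguments. Unset Strict Implicit. Unset Printing Implicit Defensive.
Import GRing.Theory.

Lemma subset_card_between (X : finType) (A B : {set X}) k :
  A \subset B -> #|A| <= k <= #|B| ->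
  exists C : {set X}, [/\ A \subset C, C \subset B & #|C| = k].
Proof.
move=> sAB; elim: k => [|k IHk] /andP[le_Ak le_kB].
  by exists A; rewrite sAB; move: le_Ak; rewrite leqn0 => /eqP.
have [e_Ak | lt_Ak] := eqVneq #|A| k.+1; first by exists A.
have /IHk[C [sAC sCB e_C]] : #|A| <= k <= #|B|.
  by rewrite -ltnS ltn_neqAle lt_Ak le_Ak ltnW.
have [x /setDP[Bx Cx]] : exists x, x \in B :\: C.
  apply/set0Pn; rewrite setD_eq0; apply: contraTN le_kB => /subset_leq_card.
  by rewrite e_C -ltnNge.
exists (x |: C); split; rewrite ?cardsU1 ?Cx ?e_C //.
  exact: subset_trans sAC (subsetUr _ _).
by rewrite subUset sub1set Bx.
Qed.

Local Open Scope ring_scope.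

Lemma F2E (x : 'F_2) : x = (x != 0)%:R.
Proof. by case: x => [[|[|k]] //= lt_x2]; apply: val_inj. Qed.

Lemma card_cV_F2 r : #|'cV['F_2]_r| = (2 ^ r)%N.
Proof. by rewrite card_mx card_Fp // muln1. Qed.

Section F2Matrices.
Variables m n : nat.
Implicit Types A B : 'M['F_2]_(m, n).

Lemma oppmx_F2 A : - A = A.
Proof. by apply/matrixP => i j; rewrite mxE oppr_pchar2 ?pchar_Fp. Qed.

Lemma addmx_F2 A : A + A = 0.
Proof. by rewrite -{1}[A]oppmx_F2 addNr. Qed.

Lemma addmx_F2_eq0 A B : (A + B == 0) = (A == B).
Proof. by rewrite addr_eq0 oppmx_F2. Qed.

End F2Matrices.

Section ParityCheck.
Variables r n : nat.
Implicit Types (H : 'M['F_2]_(r, n)) (w : 'rV['F_2]_n) (S : {set 'I_n}).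

Definition supp w := [set j | w 0 j != 0].

Definition indicator_row S : 'rV['F_2]_n := \row_j (j \in S)%:R.

Lemma supp_indicator_row S : supp (indicator_row S) = S.
Proof. by apply/setP => j; rewrite inE mxE; case: (j \in S); rewrite ?oner_eq0. Qed.

Lemma mulmx_trE H w : H *m w^T = \sum_(j in supp w) col j H.
Proof.
apply/colP => i; rewrite !mxE summxE [RHS]big_mkcond /=; apply: eq_bigr => j _.
by rewrite !mxE inE [w 0 j]F2E; case: (_ != 0); rewrite ?mulr0 ?mulr1.
Qed.

Lemma mulmx_indicator_row H S : H *m (indicator_row S)^T = \sum_(j in S) col j H.
Proof. by rewrite mulmx_trE supp_indicator_row. Qed.

Lemma wt_indicator_row S : wt (indicator_row S) = #|S|.
Proof. by rewrite -{2}(supp_indicator_row S). Qed.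

Lemma wt0 : wt (0 : 'rV['F_2]_n) = 0%N.
Proof. by apply/eqP; rewrite cards_eq0; apply/eqP/setP => j; rewrite !inE mxE eqxx. Qed.

Lemma wtD w1 w2 : (wt (w1 + w2) <= wt w1 + wt w2)%N.
Proof.
apply: leq_trans _ (leq_card_setU (supp w1) (supp w2)).1.
apply/subset_leq_card/subsetP => j; rewrite !inE mxE.
by apply: contraR; rewrite negb_or !negbK => /andP[/eqP-> /eqP->]; rewrite addr0.
Qed.

Lemma covers_withinP H R :
  covers_within H R <-> forall s, exists2 w, (wt w <= R)%N & s = H *m w^T.
Proof.
split=> [cov s | cov s].
  have [S [le_SR ->]] := cov s.
  by exists (indicator_row S); rewrite ?wt_indicator_row ?mulmx_indicator_row.
by have [w le_wR ->] := cov s; exists (supp w); rewrite -mulmx_trE.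
Qed.

Lemma covers_within_leq H R R' : (R <= R')%N -> covers_within H R -> covers_within H R'.
Proof.
by move=> le_RR' cov s; have [S [le_SR ->]] := cov s; exists S; rewrite (leq_trans le_SR).
Qed.

Lemma covers_within_rank H R : covers_within H R -> \rank H = r.
Proof.
move/covers_withinP=> cov; apply/eqP; rewrite eqn_leq rank_leq_row -mxrank_tr.
have sub1 : (1%:M <= H^T)%MS.
  apply/row_subP => i; have [w _ e_i] := cov (row i 1%:M)^T.
  by rewrite -[row i _]trmxK e_i trmx_mul trmxK submxMl.
by rewrite -{1}[r](mxrank1 'F_2) mxrankS.
Qed.

Lemma covers_within1_card H : covers_within H 1 -> (2 ^ r <= n.+1)%N.
Proof.
move=> cov; have sub : [set: 'cV['F_2]_r] \subset 0 |: [set col j H | j : 'I_n].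
  apply/subsetP => s _; have [S [le_S1 ->]] := cov s.
  have [-> | [j Sj]] := set_0Vmem S; first by rewrite big_set0 setU11.
  have /cards1P[k ->] : #|S| == 1%N by rewrite eqn_leq le_S1 card_gt0; apply/set0Pn; exists j.
  by rewrite big_set1 setU1r //; apply/imsetP; exists k.
rewrite -card_cV_F2 -cardsT.
apply: leq_trans (subset_leq_card sub) _.
rewrite cardsU1; apply: (leq_add (leq_b1 _)).
by apply: leq_trans (leq_imset_card _ _) _; rewrite card_ord.
Qed.

Lemma covering_radius_is2 H :
  covers_within H 2 -> (n.+2 <= 2 ^ r)%N -> covering_radius_is H 2.
Proof.
move=> cov2 big; split=> // R cov; rewrite leqNgt; apply/negP => lt_R2.
have := covers_within1_card (covers_within_leq (lt_R2 : (R <= 1)%N) cov).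
by rewrite leqNgt (leq_trans _ big).
Qed.

Lemma wt_codeword_ge3 H :
  (forall j, col j H != 0) -> injective (fun j => col j H) ->
  forall w, codeword H w -> w <> 0 -> (3 <= wt w)%N.
Proof.
move=> nzH injH w cw w0; rewrite leqNgt; apply/negP => lt_w3.
have sum0 : \sum_(i in supp w) col i H = 0 by rewrite -mulmx_trE.
have : [|| wt w == 0, wt w == 1 | wt w == 2]%N by move: lt_w3; case: (wt w) => [|[|[|]]].
case/or3P => [/eqP/cards0_eq w_0 | /cards1P[i w_i] | /cards2P[i [i' [ii' w_ii']]]].
- apply: w0; apply/rowP => i; have : i \notin supp w by rewrite /supp w_0 inE.
  by rewrite inE negbK mxE => /eqP.
- by move: sum0; rewrite /supp w_i big_set1; apply/eqP.
- move: sum0; rewrite /supp w_ii' big_setU1 ?inE //= big_set1 => /eqP.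
  by rewrite addmx_F2_eq0 => /eqP/injH/eqP; rewrite (negbTE ii').
Qed.

Lemma codeword_wt3 H j k l :
  (forall j, col j H != 0) -> j != k -> col l H = col j H + col k H ->
  exists2 w, codeword H w /\ w <> 0 & wt w = 3%N.
Proof.
move=> nzH jk e_l.
have lj : l != j.
  by apply: contraNneq (nzH k) => lj; rewrite -(addKr (col j H) (col k H)) -e_l lj addNr.
have lk : l != k.
  by apply: contraNneq (nzH j) => lk; rewrite -(addrK (col k H) (col j H)) -e_l lk addrN.
have card3 : #|[set j; k; l]| = 3%N.
  by rewrite -setUA cardsU1 cardsU1 cards1 !inE negb_or jk eq_sym lj eq_sym lk.
exists (indicator_row [set j; k; l]); last by rewrite wt_indicator_row.
split; last by move=> w0; move: (wt_indicator_row [set j; k; l]); rewrite w0 wt0 card3.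
rewrite /codeword mulmx_indicator_row -setUA big_setU1 ?inE ?negb_or ?jk 1?eq_sym ?lj //=.
by rewrite big_setU1 ?inE 1?eq_sym ?lk //= big_set1 addrA -e_l addmx_F2.
Qed.

Lemma min_dist_is3 H :
  (forall j, col j H != 0) -> injective (fun j => col j H) ->
  (exists j k l, j != k /\ col l H = col j H + col k H) -> min_dist_is H 3.
Proof.
move=> nzH injH [j [k [l [jk e_l]]]]; split; last exact: wt_codeword_ge3.
by have [w [cw w0] wt3] := codeword_wt3 nzH jk e_l; exists w.
Qed.

End ParityCheck.

Definition covers2 (r : nat) (T : {set 'cV['F_2]_r}) : Prop :=
  forall t, exists a b, [/\ a \in 0 |: T, b \in 0 |: T & t = a + b].

Definition has_triple (r : nat) (T : {set 'cV['F_2]_r}) : Prop :=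
  exists a b, [/\ a \in T, b \in T, a + b \in T & a != b].

Lemma covers2_subset (r : nat) (T T' : {set 'cV['F_2]_r}) :
  0 |: T \subset 0 |: T' -> covers2 T -> covers2 T'.
Proof.
move=> /subsetP sTT' cov t; have [a [b [Ta Tb ->]]] := cov t.
by exists a, b; split; rewrite ?sTT'.
Qed.

Section ColumnSet.
Variables (r : nat) (T : {set 'cV['F_2]_r}).

Definition colset_mx : 'M['F_2]_(r, #|T|) := \matrix_(i, j) (enum_val j : 'cV_r) i 0.

Lemma col_colset_mx j : col j colset_mx = enum_val j.
Proof. by apply/colP => i; rewrite !mxE. Qed.

Lemma colset_mx_wt1 a :
  a \in 0 |: T -> exists2 w, (wt w <= 1)%N & a = colset_mx *m w^T.
Proof.
case/setU1P => [-> | Ta]; first by exists 0; rewrite ?wt0 // trmx0 mulmx0.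
exists (indicator_row [set enum_rank_in Ta a]); first by rewrite wt_indicator_row cards1.
by rewrite mulmx_indicator_row big_set1 col_colset_mx enum_rankK_in.
Qed.

Lemma colset_mx_covers : covers2 T -> covers_within colset_mx 2.
Proof.
move=> cov; apply/covers_withinP => t; have [a [b [Ta Tb ->]]] := cov t.
have [[wa wa1 ->] [wb wb1 ->]] := (colset_mx_wt1 Ta, colset_mx_wt1 Tb).
exists (wa + wb); first exact: leq_trans (wtD wa wb) (leq_add wa1 wb1).
by rewrite linearD mulmxDr.
Qed.

Lemma colset_mx_code :
  0 \notin T -> covers2 T -> has_triple T -> (#|T|.+2 <= 2 ^ r)%N -> is_code 3 2 colset_mx.
Proof.
move=> T0 cov [a [b [Ta Tb Tab ab]]] big; have cov2 := colset_mx_covers cov.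
split; first exact: covers_within_rank cov2.
split; last exact: covering_radius_is2.
apply: min_dist_is3.
- by move=> j; rewrite col_colset_mx; apply: contraNneq T0 => <-; apply: enum_valP.
- by move=> j k; rewrite !col_colset_mx; apply: enum_val_inj.
exists (enum_rank_in Ta a), (enum_rank_in Ta b), (enum_rank_in Ta (a + b)).
rewrite !col_colset_mx !enum_rankK_in //; split=> //.
by apply: contra_neq ab => /(congr1 enum_val); rewrite !enum_rankK_in.
Qed.

End ColumnSet.

Lemma code_of_set (r N : nat) (T : {set 'cV['F_2]_r}) :
  0 \notin T -> covers2 T -> has_triple T -> (#|T| <= N)%N -> (N.+2 <= 2 ^ r)%N ->
  exists H : 'M['F_2]_(r, N), is_code 3 2 H.
Proof.
move=> T0 cov tri le_TN big.
pose nonzero := [set~ (0 : 'cV['F_2]_r)].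
have sT : T \subset nonzero by apply/subsetP => a Ta; rewrite !inE; apply: contraNneq T0 => <-.
have /(subset_card_between sT)[T' [sTT' sT' e_T']] : (#|T| <= N <= #|nonzero|)%N.
  rewrite le_TN cardsC1 card_cV_F2.
  by rewrite -ltnS (@ltn_predK 0) (leq_trans _ big).
rewrite -e_T'; exists (colset_mx T'); apply: colset_mx_code.
- by apply/negP => /(subsetP sT'); rewrite !inE eqxx.
- exact: covers2_subset (setUS _ sTT') cov.
- by have [a [b [Ta Tb Tab ab]]] := tri; exists a, b; split; rewrite ?(subsetP sTT').
- by rewrite e_T'.
Qed.

Fixpoint addbits (a b : bitseq) : bitseq :=
  match a, b with
  | x :: a', y :: b' => x (+) y :: addbits a' b'
  | [::], _ => b
  | _, [::] => a
  end.

Lemma nth_addbits a b i : nth false (addbits a b) i = nth false a i (+) nth false b i.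
Proof.
elim: a b i => [|x a IHa] [|y b] [|i] //=; rewrite ?addbF //.
Qed.

Fixpoint bitseqs (k : nat) : seq bitseq :=
  if k is k'.+1 then [seq false :: l | l <- bitseqs k'] ++ [seq true :: l | l <- bitseqs k']
  else [:: [::]].

Lemma mem_bitseqs l : l \in bitseqs (size l).
Proof.
elim: l => [|x l IHl] //=; rewrite mem_cat.
by case: x; rewrite (map_f (cons _)) ?orbT.
Qed.

Definition cV_of_bits (r : nat) (l : bitseq) : 'cV['F_2]_r := \col_i (nth false l i)%:R.

Definition bits_of_cV (r : nat) (s : 'cV['F_2]_r) : bitseq := [seq s i 0 != 0 | i <- enum 'I_r].

Lemma cV_of_bitsD r a b : cV_of_bits r (addbits a b) = cV_of_bits r a + cV_of_bits r b.
Proof.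
apply/colP => i; rewrite !mxE nth_addbits.
by case: (nth false a i); case: (nth false b i); rewrite ?addr0 ?add0r ?addrr_pchar2 ?pchar_Fp.
Qed.

Lemma size_bits_of_cV r (s : 'cV['F_2]_r) : size (bits_of_cV s) = r.
Proof. by rewrite size_map size_enum_ord. Qed.

Lemma bits_of_cVK r : cancel (@bits_of_cV r) (cV_of_bits r).
Proof.
move=> s; apply/colP => i; rewrite mxE (nth_map i) ?size_enum_ord //.
by rewrite nth_ord_enum -F2E.
Qed.

Definition bits_of_nat (k n : nat) : bitseq := [seq odd (n %/ 2 ^ i) | i <- iota 0 k].

(* Column [i] of the base matrix is the binary expansion of the [i]-th number, least
   significant bit first; the columns other than the leading zero one form a length-50
   code of codimension 10 and covering radius 2. *)
Definition base_numbers : seq nat :=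
  [:: 0; 222; 573; 1015; 10; 227; 127; 63; 152; 364; 400; 269; 652; 918; 52; 167; 36;
      49; 605; 60; 677; 274; 590; 285; 251; 1008; 752; 402; 405; 996; 541; 880; 204;
      283; 548; 519; 834; 529; 813; 186; 255; 474; 330; 669; 450; 261; 84; 934; 753;
      617; 440].

Definition base_bits : seq bitseq := map (bits_of_nat 10) base_numbers.

Lemma base_bits_cover :
  all (fun l => has (fun a => has (fun b => addbits a b == l) base_bits) base_bits)
      (bitseqs 10).
Proof. by vm_compute. Qed.

Definition base_col (i : 'I_51) : 'cV['F_2]_10 := cV_of_bits 10 (nth [::] base_bits i).

Lemma base_col0 : base_col 0 = 0.
Proof.
rewrite /base_col (_ : nth [::] base_bits 0 = nseq 10 false) //.
by apply/colP => i; rewrite !mxE nth_nseq if_same.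
Qed.

Lemma base_col_cover s : exists i j, s = base_col i + base_col j.
Proof.
have := mem_bitseqs (bits_of_cV s); rewrite size_bits_of_cV.
move=> /(allP base_bits_cover) /hasP[a /(nthP [::])[i lt_i <-]].
case/hasP=> b /(nthP [::])[j lt_j <-] /eqP e_s.
exists (Ordinal lt_i), (Ordinal lt_j).
by rewrite /base_col -cV_of_bitsD e_s bits_of_cVK.
Qed.

Lemma finField_cV_F2 m : (0 < m)%N ->
  exists (F : finFieldType) (phi : F -> 'cV['F_2]_m),
    {morph phi : x y / x + y} /\ bijective phi.
Proof.
move=> m_gt0; have [F chF cardF] := pPrimePowerField (isT : prime 2) m_gt0.
pose V := pPrimeCharType chF.
have /isog_isom[f /isomP[injf _]] : [set: V] \isog [set: 'rV['F_2]_m].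
  rewrite (@isog_abelem_card _ _ 2) fin_Fp_lmod_abelem //=.
  by rewrite !cardsT card_mx mul1n card_Fp // cardF.
exists F, (fun x => (f x)^T); split.
  move=> x y /=; rewrite -linearD; congr (_^T).
  by have := morphM f (in_setT x) (in_setT y); rewrite FinRing.zmodMgE.
apply: inj_card_bij; last by rewrite card_cV_F2 cardF.
by move=> x y /trmx_inj /(injmP injf); apply; rewrite inE.
Qed.

Lemma cV_F2_pair m : (1 < m)%N -> exists v w : 'cV['F_2]_m, [/\ v != 0, w != 0 & v != w].
Proof.
move=> m_gt1; pose e (i : 'I_m) : 'cV['F_2]_m := delta_mx i 0.
have e_neq0 i : e i != 0.
  by apply/eqP => /matrixP/(_ i 0); rewrite !mxE !eqxx => /eqP; rewrite oner_eq0.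
exists (e (Ordinal (ltnW m_gt1))), (e (Ordinal m_gt1)); rewrite !e_neq0; split=> //.
by apply/eqP => /matrixP/(_ (Ordinal m_gt1) 0); rewrite !mxE !eqxx /= => /eqP; rewrite eq_sym oner_eq0.
Qed.

Section Doubling.
Variables (k m : nat) (F : finFieldType) (phi : F -> 'cV['F_2]_m).
Hypotheses (phiD : {morph phi : x y / x + y}) (phi_bij : bijective phi).

Let phi0 : phi 0 = 0.
Proof. by apply: (@addrI _ (phi 0)); rewrite -phiD !addr0. Qed.

HB.instance Definition _ := GRing.isNmodMorphism.Build F 'cV['F_2]_m phi (phi0, phiD).

Variables (I : finType) (c : I -> 'cV['F_2]_k) (xi : I -> F) (i0 : I).
Hypotheses (xi_inj : injective xi) (c_i0 : c i0 = 0) (c_cover : forall s, exists i j, s = c i + c j).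

Definition doubling_col (u : (I * F) + F) : 'cV['F_2]_(k + (m + m)) :=
  match u with
  | inl (i, x) => col_mx (c i) (col_mx (phi x) (phi (xi i * x)))
  | inr y => col_mx 0 (col_mx 0 (phi y))
  end.

Lemma doubling_col_cover t : exists u v, t = doubling_col u + doubling_col v.
Proof.
have [phi' _ phi'K] := phi_bij.
have [s [x [y ->]]] : exists s x y, t = col_mx s (col_mx (phi x) (phi y)).
  by exists (usubmx t), (phi' (usubmx (dsubmx t))), (phi' (dsubmx (dsubmx t))); rewrite !phi'K !vsubmxK.
have [-> | s_neq0] := eqVneq s 0.
  exists (inl (i0, x)), (inr (y - xi i0 * x)).
  by rewrite /= add_col_mx c_i0 add_col_mx !addr0 -raddfD addrC subrK.
have [i [j e_s]] := c_cover s.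
have xi_ij : xi i - xi j != 0.
  by rewrite subr_eq0; apply: contraNneq s_neq0 => /xi_inj eij; rewrite e_s eij addmx_F2.
(* [z] solves [xi i * z + xi j * (x - z) = y]. *)
pose z := (xi i - xi j)^-1 * (y - xi j * x).
exists (inl (i, z)), (inl (j, x - z)).
rewrite /= !add_col_mx -!raddfD -e_s addrC subrK.
congr (col_mx _ (col_mx _ (phi _))).
by rewrite mulrBr addrCA -mulrBl mulVKf // addrC subrK.
Qed.

Definition doubling_set := [set doubling_col u | u : (I * F) + F] :\ 0.

Lemma doubling_set0 : 0 \notin doubling_set.
Proof. by rewrite setD11. Qed.

Lemma doubling_set_covers2 : covers2 doubling_set.
Proof.
move=> t; have [u [v ->]] := doubling_col_cover t.
have inD w : doubling_col w \in 0 |: doubling_set.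
  by rewrite !inE; case: eqP => //= _; apply/imsetP; exists w.
by exists (doubling_col u), (doubling_col v); rewrite !inD.
Qed.

Lemma doubling_set_triple : (1 < m)%N -> has_triple doubling_set.
Proof.
move=> m_gt1; have [v [w [v0 w0 vw]]] := cV_F2_pair m_gt1.
have [phi' _ phi'K] := phi_bij.
have inD x : phi x != 0 -> doubling_col (inr x) \in doubling_set.
  move=> phix0; rewrite !inE /= !col_mx_eq0 !eqxx (negbTE phix0) /=.
  by apply/imsetP; exists (inr x).
exists (doubling_col (inr (phi' v))), (doubling_col (inr (phi' w))).
rewrite !inD ?phi'K //; split=> //.
- by rewrite /= add_col_mx add0r add_col_mx add0r -phiD inD // phiD !phi'K addmx_F2_eq0.
- by apply: contra_neq vw => /eq_col_mx[_ /eq_col_mx[_]]; rewrite !phi'K.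
Qed.

Lemma card_doubling_set : (#|doubling_set| <= #|I| * #|F| + #|F|)%N.
Proof.
apply: leq_trans (subset_leq_card (subD1set _ _)) _.
by apply: leq_trans (leq_imset_card _ _) _; rewrite card_sum card_prod.
Qed.

End Doubling.

Local Close Scope ring_scope.

Lemma doubling_code m : 6 <= m ->
  exists H : 'M['F_2]_(10 + (m + m), 53 * 2 ^ m - 3), is_code 3 2 H.
Proof.
move=> m_ge6; have [F [phi [phiD phi_bij]]] := finField_cV_F2 (leq_trans (isT : 0 < 6) m_ge6).
have cardF : #|F| = 2 ^ m by rewrite (bij_eq_card phi_bij) card_cV_F2.
have pow_ge64 : 64 <= 2 ^ m by rewrite -[64]/(2 ^ 6) leq_pexp2l.
have le_51F : 51 <= #|F| by rewrite cardF (leq_trans _ pow_ge64).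
pose xi (i : 'I_51) : F := enum_val (widen_ord le_51F i).
have xi_inj : injective xi by move=> i j /enum_val_inj/(congr1 val) eq_ij; apply: val_inj.
apply: (code_of_set _ (doubling_set_covers2 phiD phi_bij xi_inj base_col0 base_col_cover)).
- exact: doubling_set0.
- exact: doubling_set_triple (leq_trans (isT : 1 < 6) m_ge6).
- by apply: leq_trans (card_doubling_set _ _ _) _; rewrite card_ord cardF; lia.
- by rewrite !expnD; move: pow_ge64; set K := 2 ^ m; nia.
Qed.

Lemma ell2_le_of_code (r n d R : nat) (H : 'M['F_2]_(r, n)) : is_code d R H -> ell2_le r R n.
Proof. by case=> rkH [_ crH]; exists n; split=> //; exists H. Qed.

Theorem theorem5p5 :
  forall r : nat, r \in [:: 22; 24; 26] ->
    (exists H : 'M['F_2]_(r, 53 * 2 ^ (r %/ 2 - 5) - 3),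
        is_code 3 2 H) /\
    ell2_le r 2 (53 * 2 ^ (r %/ 2 - 5) - 3).
Proof.
have code_ell2 m : 6 <= m ->
    (exists H : 'M['F_2]_(10 + (m + m), 53 * 2 ^ m - 3), is_code 3 2 H) /\
    ell2_le (10 + (m + m)) 2 (53 * 2 ^ m - 3).
  by move=> /doubling_code[H codeH]; split; [exists H | exact: ell2_le_of_code codeH].
move=> r; rewrite !inE => /or3P[] /eqP->.
- exact: (code_ell2 6).
- exact: (code_ell2 7).
- exact: (code_ell2 8).
Qed.
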